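(* The relations $[B_{r-1},[B_r,[F_X^+,B_{\tau(r)}]_q]_q]_q=[[B_{r-1},[B_r,F_X^+]_q]_q,B_{\tau(r)}]_q+qc_{\tau(r)}B_{r-1}L_r(K_X-K_X^{-1})$ and $[B_{\tau(r-1)},[B_{\tau(r)},[F_X^-,B_r]_q]_q]_q=[[B_{\tau(r-1)},[B_{\tau(r)},F_X^-]_q]_q,B_r]_q+qc_rB_{\tau(r-1)}L_{\tau(r)}(K_X-K_X^{-1})$ hold in $B_{\mathbf c}$.
   Context: Let $\mathbb K$ be a field of characteristic zero and $q$ an indeterminate. $n\ge1$, $I=\{1,\dots,n\}$, $\mathfrak g=\mathfrak{sl}_{n+1}(\mathbb C)$, simple roots $\alpha_i$, fundamental weights $\varpi_i$, weight lattice $P$, Cartan matrix $a_{ii}=2$, $a_{ij}=-1$ if $|i-j|=1$, else $0$, form $(\alpha_i,\alpha_j)=a_{ij}$, $(\alpha_i,\varpi_j)=\delta_{ij}$. $U_q(\mathfrak g)$ is the $\mathbb K(q^{1/2})$-algebra generated by $E_i,F_i,K_\mu$ ($\mu\in P$) with $K_0=1$, $K_\mu K_\lambda=K_{\mu+\lambda}$, $K_\mu E_i=q^{(\alpha_i,\mu)}E_iK_\mu$, $K_\mu F_i=q^{-(\alpha_i,\mu)}F_iK_\mu$, $E_iF_j-F_jE_i=\delta_{ij}\frac{K_i-K_i^{-1}}{q-q^{-1}}$ ($K_i=K_{\alpha_i}$), and the quantum Serre relations. $[a,b]_c=ab-cba$. Fix $r$ with $2\le r\le\lceil n/2\rceil-1$,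 $X=\{r+1,\dots,n-r\}$, $\tau(i)=n-i+1$ (on weights $\varpi_i\mapsto\varpi_{\tau(i)}$). $E_X^+=[E_{r+1},[\dots,[E_{n-r-1},E_{n-r}]_{q^{-1}}\dots]_{q^{-1}}]_{q^{-1}}$, $E_X^-=[E_{n-r},[\dots,[E_{r+2},E_{r+1}]_{q^{-1}}\dots]_{q^{-1}}]_{q^{-1}}$, $F_X^+=[F_{r+1},[\dots,[F_{n-r-1},F_{n-r}]_q\dots]_q]_q$, $F_X^-=[F_{n-r},[\dots,[F_{r+2},F_{r+1}]_q\dots]_q]_q$ (equal to $E_{r+1}$, $F_{r+1}$ if $|X|=1$); $K_X=K_{r+1}\cdots K_{n-r}$; $L_i=K_iK_{\tau(i)}^{-1}$. $\mathcal M_X$ is generated by $E_j,F_j,K_j^{\pm1}$ ($j\in X$); $U^0_\Theta$ by the $K_\mu$ with $-w_X\tau(\mu)=\mu$ ($w_X$ longest element of the parabolic Weyl subgroup for $X$). Parameters $c_i\in\mathbb K(q^{1/2})^\times$ ($i\in I\setminus X$) with $c_i=c_{\tau(i)}$ for $i\notin X\cup\{r,\tau(r)\}$. $B_i=F_i-c_iE_{\tau(i)}K_i^{-1}$ for $i\in I\setminus(X\cup\{r,\tau(r)\})$, $B_r=F_r-c_r[E_X^+,E_{\tau(r)}]_{q^{-1}}K_r^{-1}$, $B_{\tau(r)}=F_{\tau(r)}-c_{\tau(r)}[E_X^-,E_r]_{q^{-1}}K_{\tau(r)}^{-1}$; $B_{\mathbf c}$ is the subalgebra generated by $\mathcal M_X$,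 $U^0_\Theta$ and the $B_i$. *)

From HB Require Import structures.
From mathcomp Require Import all_boot all_order all_algebra.
Set Implicit Arguments. Unset Strict Implicit. Unset Printing Implicit Defensive.
Import Order.TTheory GRing.Theory Num.Theory.
Local Open Scope ring_scope.

(* Ground field K(q^{1/2}) : rational functions in one variable s = q^{1/2}. *)
Definition Lfield (k : fieldType) := {fraction {poly k}}.
Definition qhalf (k : fieldType) : Lfield k := FracField.tofrac 'X.
Definition qpar (k : fieldType) : Lfield k := qhalf k ^+ 2.

(* Indices i in I = {1,...,n} are natural numbers 1 <= i <= n.
   Weights mu in P are written in the basis of fundamental weights:
   mu : 'rV[int]_n, coordinate j (0-based) is the coefficient of varpi_{j+1}. *)
Definition cartan (i j : nat) : int :=
  if i == j then 2 else if (i == j.+1) || (j == i.+1) then -1 else 0.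

Definition alpha (n i : nat) : 'rV[int]_n := \row_(j < n) cartan i j.+1.

(* (alpha_i, mu) = coefficient of varpi_i in mu *)
Definition pairA (n i : nat) (mu : 'rV[int]_n) : int :=
  \sum_(j < n | j.+1 == i) mu ord0 j.

Definition tau (n i : nat) : nat := n - i + 1.

Definition qcomm (L : fieldType) (A : algType L) (c : L) (a b : A) : A :=
  a * b - c *: (b * a).

Definition Uq_rels (n : nat) (L : fieldType) (q : L) (A : algType L)
  (E F : nat -> A) (Kw : 'rV[int]_n -> A) : Prop :=
  [/\ Kw 0 = 1,
      (forall mu la, Kw mu * Kw la = Kw (mu + la)),
      ((forall mu i, (1 <= i <= n)%N -> Kw mu * E i = q ^ (pairA i mu) *: (E i * Kw mu)) /\
       (forall mu i, (1 <= i <= n)%N -> Kw mu * F i = q ^ (- pairA i mu) *: (F i * Kw mu))),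
      (forall i j, (1 <= i <= n)%N -> (1 <= j <= n)%N ->
        E i * F j - F j * E i =
        (if i == j then (q - q^-1)^-1 *: (Kw (alpha n i) - Kw (- alpha n i)) else 0))
    & ((forall i j, (1 <= i <= n)%N -> (1 <= j <= n)%N -> ((i == j.+1) || (j == i.+1)) ->
        E i ^+ 2 * E j - (q + q^-1) *: (E i * E j * E i) + E j * E i ^+ 2 = 0
        /\ F i ^+ 2 * F j - (q + q^-1) *: (F i * F j * F i) + F j * F i ^+ 2 = 0) /\
      (forall i j, (1 <= i <= n)%N -> (1 <= j <= n)%N -> (i.+1 < j)%N ->
        E i * E j = E j * E i /\ F i * F j = F j * F i))].

Section Defs.
Variables (n r : nat) (L : fieldType) (q : L) (A : algType L).
Variables (E F : nat -> A) (Kw : 'rV[int]_n -> A) (c : nat -> L).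

(* E_X^+ = [E_{r+1},[...,[E_{n-r-1},E_{n-r}]_{q^-1}...]_{q^-1}]_{q^-1} *)
Definition EXp : A := foldr (fun j acc => qcomm q^-1 (E j) acc) (E (n - r))
                            (iota r.+1 (n - r - r.+1)).
(* E_X^- = [E_{n-r},[...,[E_{r+2},E_{r+1}]_{q^-1}...]_{q^-1}]_{q^-1} *)
Definition EXm : A := foldr (fun j acc => qcomm q^-1 (E j) acc) (E r.+1)
                            (rev (iota r.+2 (n - r - r.+1))).
Definition FXp : A := foldr (fun j acc => qcomm q (F j) acc) (F (n - r))
                            (iota r.+1 (n - r - r.+1)).
Definition FXm : A := foldr (fun j acc => qcomm q (F j) acc) (F r.+1)
                            (rev (iota r.+2 (n - r - r.+1))).

Definition KX : A := \prod_(r.+1 <= j < (n - r).+1) Kw (alpha n j).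
Definition KXinv : A := \prod_(r.+1 <= j < (n - r).+1) Kw (- alpha n j).

Definition Lw (i : nat) : A := Kw (alpha n i) * Kw (- alpha n (tau n i)).

Definition Bgen (i : nat) : A :=
  if i == r then F r - c r *: (qcomm q^-1 EXp (E (tau n r)) * Kw (- alpha n r))
  else if i == tau n r then
    F (tau n r) - c (tau n r) *: (qcomm q^-1 EXm (E r) * Kw (- alpha n (tau n r)))
  else F i - c i *: (E (tau n i) * Kw (- alpha n i)).
End Defs.

(* Write a = B_{r-1}, b = B_r, x = F_X^+ and y = B_{tau(r)}. Applying twice the
   q-Jacobi identity [u,[v,w]_q]_q = [[u,v]_q,w]_q + q [v,[u,w]] reduces the first
   relation to the ordinary commutators [a,y] and [b,y]. One has [a,y] = 0, and,
   because the root vectors [E_X^+,E_{tau(r)}]_{q^-1} and [E_X^-,E_r]_{q^-1}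
   commute (a consequence of the Serre relations),
     [b,y] = q^-1 c_{tau(r)} E_X^- L_r - q^-1 c_r E_X^+ L_{tau(r)}.
   The remaining term [a,[x,[b,y]]]_q is then evaluated with the identity
   [F_X^+,E_X^-] = (K_X^-1 - K_X)/(q - q^-1), proved by induction on |X|: the
   E_X^+ part vanishes because L_{tau(r)} a = q^-1 a L_{tau(r)}, and the E_X^- part
   gives the correction term. The second relation is the image of the first
   under the diagram automorphism E_i, F_i, K_i |-> E_tau(i), F_tau(i), K_tau(i). *)

From HB Require Import structures.
From mathcomp Require Import all_boot all_order all_algebra.
From mathcomp Require Import ring zify.
Set Implicit Arguments. Unset Strict Implicit. Unset Printing Implicit Defensive.
Import Order.TTheory GRing.Theory Num.Theory.
Local Open Scope ring_scope.

(** * Normalization in free algebras *)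

Inductive sexpr := SAtom of nat | SAdd of sexpr & sexpr | SOpp of sexpr
  | SMul of sexpr & sexpr | SOne | SZero.

Fixpoint sexpr_eqb (a b : sexpr) : bool :=
  match a, b with
  | SAtom i, SAtom j => i == j
  | SAdd a1 a2, SAdd b1 b2 => sexpr_eqb a1 b1 && sexpr_eqb a2 b2
  | SOpp a1, SOpp b1 => sexpr_eqb a1 b1
  | SMul a1 a2, SMul b1 b2 => sexpr_eqb a1 b1 && sexpr_eqb a2 b2
  | SOne, SOne => true
  | SZero, SZero => true
  | _, _ => false
  end.

Lemma sexpr_eqbP : Equality.axiom sexpr_eqb.
Proof.
elim=> [i|a1 IH1 a2 IH2|a1 IH1|a1 IH1 a2 IH2||] [j|b1 b2|b1|b1 b2||] /=;
  try by constructor.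
- by apply: (iffP eqP) => [->|[]].
- by case: IH1 => [->|h]; [case: IH2 => [->|h]|]; constructor => // -[].
- by case: IH1 => [->|h]; constructor => // -[].
- by case: IH1 => [->|h]; [case: IH2 => [->|h]|]; constructor => // -[].
Qed.
HB.instance Definition _ := hasDecEq.Build sexpr sexpr_eqbP.

Inductive aexpr := AAtom of nat | AAdd of aexpr & aexpr | AOpp of aexpr
  | AMul of aexpr & aexpr | AScale of sexpr & aexpr | AZero | AOne.

(* A linear combination of words, a word being a list of atom indices. *)
Definition nform := seq (sexpr * seq nat).

Fixpoint normalize (e : aexpr) : nform :=
  match e with
  | AAtom i => [:: (SOne, [:: i])]
  | AAdd a b => normalize a ++ normalize b
  | AOpp a => [seq (SOpp p.1, p.2) | p <- normalize a]
  | AMul a b => [seq (SMul p.1 p'.1, p.2 ++ p'.2) | p <- normalize a, p' <- normalize b]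
  | AScale c a => [seq (SMul c p.1, p.2) | p <- normalize a]
  | AZero => [::]
  | AOne => [:: (SOne, [::])]
  end.

Fixpoint word_coef (w : seq nat) (l : nform) : sexpr :=
  if l is p :: l' then
    if p.2 == w then SAdd p.1 (word_coef w l') else word_coef w l'
  else SZero.

Definition word_coefs (l : nform) : seq sexpr :=
  [seq word_coef w l | w <- undup (map snd l)].

Section Evaluation.
Variables (L : fieldType) (A : algType L) (envL : seq L) (envA : seq A).

Fixpoint seval (c : sexpr) : L :=
  match c with
  | SAtom i => nth 0 envL i
  | SAdd a b => seval a + seval b
  | SOpp a => - seval a
  | SMul a b => seval a * seval b
  | SOne => 1
  | SZero => 0
  end.

Fixpoint aeval (e : aexpr) : A :=
  match e with
  | AAtom i => nth 0 envA i
  | AAdd a b => aeval a + aeval b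
  | AOpp a => - aeval a
  | AMul a b => aeval a * aeval b
  | AScale c a => seval c *: aeval a
  | AZero => 0
  | AOne => 1
  end.

Definition weval (w : seq nat) : A := foldr (fun i acc => nth 0 envA i * acc) 1 w.
Definition nfeval (l : nform) : A := \sum_(p <- l) seval p.1 *: weval p.2.

Lemma weval_cat w1 w2 : weval (w1 ++ w2) = weval w1 * weval w2.
Proof. by elim: w1 => [|i w IH] /=; rewrite ?mul1r // IH mulrA. Qed.

Lemma normalizeK e : nfeval (normalize e) = aeval e.
Proof.
rewrite /nfeval; elim: e => [i|a IHa b IHb|a IHa|a IHa b IHb|c a IHa||] /=.
- by rewrite big_seq1 /= scale1r mulr1.
- by rewrite big_cat IHa IHb.
- by rewrite big_map -IHa -sumrN; apply: eq_bigr => p _; rewrite scaleNr.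
- rewrite big_allpairs_dep -IHa -IHb mulr_suml; apply: eq_bigr => p _.
  rewrite mulr_sumr; apply: eq_bigr => p' _ /=.
  by rewrite weval_cat -scalerAl -scalerAr scalerA mulrC.
- by rewrite big_map -IHa scaler_sumr; apply: eq_bigr => p _; rewrite scalerA.
- by rewrite big_nil.
- by rewrite big_seq1 /= scale1r.
Qed.

Lemma seval_word_coef w l :
  seval (word_coef w l) = \sum_(p <- l | p.2 == w) seval p.1.
Proof.
elim: l => [|p l IH] /=; first by rewrite big_nil.
by rewrite big_cons; case: ifP => _ //=; rewrite IH.
Qed.

Lemma nfeval_eq0 (l : nform) :
  (forall w, has (fun p => p.2 == w) l -> seval (word_coef w l) = 0) ->
  nfeval l = 0.
Proof.
elim: {l}(size l) {-2}l (leqnn (size l)) => [|N IH] [|p0 l] // hs H;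
  try by rewrite /nfeval big_nil.
set w0 := p0.2.
rewrite /nfeval (bigID (fun p => p.2 == w0)) /=.
rewrite (eq_bigr (fun p => seval p.1 *: weval w0)); last by move=> p /eqP ->.
rewrite -scaler_suml -seval_word_coef H /= ?eqxx // scale0r add0r -big_filter.
apply: IH => [|w /hasP [p]].
  by rewrite size_filter /= eqxx /= add0n (leq_trans (count_size _ _)).
rewrite mem_filter => /andP [hp pl] /eqP <-.
have := H p.2; rewrite !seval_word_coef big_filter_cond.
rewrite (eq_bigl (fun i => (i.2 != w0) && (i.2 == p.2))) => [-> //|].
  by apply/hasP; exists p; rewrite ?inE ?pl ?orbT.
by move=> i; case: (eqVneq i.2 p.2) => [->|]; rewrite ?hp ?andbF.
Qed.

Fixpoint all_zero (cs : seq sexpr) : Prop :=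
  if cs is c :: cs' then seval c = 0 /\ all_zero cs' else True.

Lemma aeval_eq (e1 e2 : aexpr) :
  all_zero (word_coefs (normalize (AAdd e1 (AOpp e2)))) -> aeval e1 = aeval e2.
Proof.
move=> H; apply/eqP; rewrite -subr_eq0; apply/eqP.
rewrite -[_ - _]/(aeval (AAdd e1 (AOpp e2))) -normalizeK.
apply: nfeval_eq0 => w hw.
have : w \in undup (map snd (normalize (AAdd e1 (AOpp e2)))).
  by rewrite mem_undup; case/hasP: hw => p pl /eqP <-; apply: map_f.
move: H; rewrite /word_coefs.
elim: (undup _) => [|w' ws IH] //= [h1 h2]; rewrite inE => /orP [/eqP ->|] //.
exact: IH.
Qed.
End Evaluation.

Ltac env_index x l :=
  match l with
  | x :: _ => constr:(0%N)
  | _ :: ?t => let n := env_index x t in constr:(S n)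
  end.
Ltac env_add x l :=
  match l with
  | context [x :: _] => l
  | _ => eval cbn [cat] in (l ++ [:: x])
  end.

Ltac reify_scalar t envL :=
  lazymatch t with
  | @GRing.add _ ?a ?b =>
      lazymatch reify_scalar a envL with (?ea, ?env1) =>
      lazymatch reify_scalar b env1 with (?eb, ?env2) =>
        constr:((SAdd ea eb, env2)) end end
  | @GRing.mul _ ?a ?b =>
      lazymatch reify_scalar a envL with (?ea, ?env1) =>
      lazymatch reify_scalar b env1 with (?eb, ?env2) =>
        constr:((SMul ea eb, env2)) end end
  | @GRing.opp _ ?a =>
      lazymatch reify_scalar a envL with (?ea, ?env1) => constr:((SOpp ea, env1)) end
  | @GRing.zero _ => constr:((SZero, envL))
  | @GRing.one _ => constr:((SOne, envL))
  | _ => let env' := env_add t envL in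
         let i := env_index t env' in constr:((SAtom i, env'))
  end.

Ltac reify_alg t envL envA :=
  lazymatch t with
  | @GRing.add _ ?a ?b =>
      lazymatch reify_alg a envL envA with (?ea, ?eL1, ?eA1) =>
      lazymatch reify_alg b eL1 eA1 with (?eb, ?eL2, ?eA2) =>
        constr:((AAdd ea eb, eL2, eA2)) end end
  | @GRing.mul _ ?a ?b =>
      lazymatch reify_alg a envL envA with (?ea, ?eL1, ?eA1) =>
      lazymatch reify_alg b eL1 eA1 with (?eb, ?eL2, ?eA2) =>
        constr:((AMul ea eb, eL2, eA2)) end end
  | @GRing.opp _ ?a =>
      lazymatch reify_alg a envL envA with (?ea, ?eL1, ?eA1) =>
        constr:((AOpp ea, eL1, eA1)) end
  | @GRing.scale _ _ ?s ?a =>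
      lazymatch reify_scalar s envL with (?es, ?eL0) =>
      lazymatch reify_alg a eL0 envA with (?ea, ?eL1, ?eA1) =>
        constr:((AScale es ea, eL1, eA1)) end end
  | @GRing.zero _ => constr:((AZero, envL, envA))
  | @GRing.one _ => constr:((AOne, envL, envA))
  | _ => let env' := env_add t envA in
         let i := env_index t env' in constr:((AAtom i, envL, env'))
  end.

(* Reduces an equation in an algebra over L to the vanishing of the scalar
   coefficient of every word in the difference of the two sides. *)
Ltac nc_reduce L A :=
  lazymatch goal with
  | |- ?x = ?y =>
    lazymatch reify_alg x (@nil L) (@nil A) with (?e1, ?eL1, ?eA1) =>
    lazymatch reify_alg y eL1 eA1 with (?e2, ?eL, ?eA) =>
      change (aeval eL eA e1 = aeval eL eA e2);
      apply: aeval_eq;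
      let cs := eval vm_compute in (word_coefs (normalize (AAdd e1 (AOpp e2)))) in
      change (all_zero eL cs);
      cbn [all_zero seval nth];
      repeat split
    end end
  end.

Ltac nc_field L A := nc_reduce L A; (try by ring); field.

(** * Commutator calculus *)

Definition commutator (R : pzRingType) (x y : R) : R := x * y - y * x.

Lemma commutator0 (R : pzRingType) (x y : R) : GRing.comm x y -> commutator x y = 0.
Proof. by rewrite /commutator => ->; rewrite subrr. Qed.

Lemma commutator_sym (R : pzRingType) (x y : R) : commutator y x = - commutator x y.
Proof. by rewrite /commutator opprB. Qed.

Lemma commutatorMr (R : pzRingType) (x y z : R) :
  GRing.comm x z -> commutator x (y * z) = commutator x y * z.
Proof. by move=> xz; rewrite /commutator mulrBl mulrA -!mulrA xz. Qed.

Definition qregular (L : fieldType) (q : L) :=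
  [/\ q != 0, q ^+ 2 - 1 != 0 & q ^+ 2 + 1 != 0].

Lemma qregular_neq0 (L : fieldType) (q : L) : qregular q -> q != 0.
Proof. by case. Qed.

Section QAlgebra.
Variables (L : fieldType) (A : algType L) (q : L).
Hypothesis hq : qregular q.

Let q_neq0 : q != 0. Proof. by case: hq. Qed.
Let qsqB1_neq0 : q ^+ 2 - 1 != 0. Proof. by case: hq. Qed.
Let qsqD1_neq0 : q ^+ 2 + 1 != 0. Proof. by case: hq. Qed.

Let qBqV_neq0 : q - q^-1 != 0.
Proof. by rewrite -(mulIr_eq0 _ (mulIf q_neq0)) mulrBl mulVf // -expr2. Qed.

Local Ltac qfield :=
  nc_field L A; by rewrite ?q_neq0 ?qsqB1_neq0 ?qsqD1_neq0 ?qBqV_neq0.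

Definition qweight (s : L) (K x : A) := K * x = s *: (x * K).

Definition serre (e x : A) := e * e * x - (q + q^-1) *: (e * x * e) + x * e * e.

Lemma commrZ (k : L) (x y : A) : GRing.comm x y -> GRing.comm x (k *: y).
Proof. by rewrite /GRing.comm -scalerAl -scalerAr => ->. Qed.

Lemma comm_qcomm (d : L) (z x y : A) :
  GRing.comm z x -> GRing.comm z y -> GRing.comm z (qcomm d x y).
Proof. by move=> zx zy; apply/commrB/commrZ; apply: commrM. Qed.

Lemma qcomm_jacobi (d : L) (a x y : A) :
  qcomm d a (qcomm d x y) = qcomm d (qcomm d a x) y + d *: commutator x (commutator a y).
Proof. rewrite /qcomm /commutator; qfield. Qed.

Lemma qcomm_assoc (d : L) (a x y : A) : GRing.comm a y ->
  qcomm d a (qcomm d x y) = qcomm d (qcomm d a x) y.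
Proof.
move=> ay; rewrite qcomm_jacobi (commutator0 ay).
by rewrite /commutator mulr0 mul0r subr0 scaler0 addr0.
Qed.

Lemma qcommDr (d : L) (a x y : A) : qcomm d a (x + y) = qcomm d a x + qcomm d a y.
Proof. rewrite /qcomm; qfield. Qed.

Lemma qcommZr (d k : L) (a x : A) : qcomm d a (k *: x) = k *: qcomm d a x.
Proof. rewrite /qcomm; qfield. Qed.

Lemma commutator_qcomm (d : L) (z x y : A) :
  commutator z (qcomm d x y) = qcomm d (commutator z x) y + qcomm d x (commutator z y).
Proof. rewrite /qcomm /commutator; qfield. Qed.

Lemma qweight1P (K x : A) : qweight 1 K x <-> GRing.comm K x.
Proof. by rewrite /qweight scale1r. Qed.

Lemma qweightM (s t : L) (K x y : A) :
  qweight s K x -> qweight t K y -> qweight (s * t) K (x * y).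
Proof.
rewrite /qweight => hx hy; rewrite mulrA hx -scalerAl -(mulrA x K y) hy.
by rewrite -scalerAr scalerA mulrA.
Qed.

Lemma qweightZ (k s : L) (K x : A) : qweight s K x -> qweight s K (k *: x).
Proof. by rewrite /qweight => h; rewrite -scalerAr h -scalerAl !scalerA mulrC. Qed.

Lemma qweightB (s : L) (K x y : A) :
  qweight s K x -> qweight s K y -> qweight s K (x - y).
Proof. by rewrite /qweight mulrBr mulrBl scalerBr => -> ->. Qed.

Lemma qweight_qcomm (d s t : L) (K x y : A) :
  qweight s K x -> qweight t K y -> qweight (s * t) K (qcomm d x y).
Proof.
move=> hx hy; apply/qweightB/qweightZ; first exact: qweightM.
by rewrite mulrC; apply: qweightM.
Qed.

Lemma qcomm_weightr (d s : L) (K x : A) :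
  qweight s K x -> qcomm d x K = (1 - d * s) *: (x * K).
Proof. by rewrite /qcomm => ->; rewrite scalerA scalerBl scale1r. Qed.

Lemma qcomm_mul_weight (t : L) (a w K : A) : GRing.comm a w -> qweight t K a ->
  qcomm q a (w * K) = (1 - q * t) *: (w * a * K).
Proof.
rewrite /qcomm => aw hK; rewrite mulrA aw -[w * K * a]mulrA hK.
by rewrite -scalerAr scalerA mulrA scalerBl scale1r.
Qed.

Lemma comm_mul_weight (s : L) (K K' x y : A) :
  GRing.comm x y -> GRing.comm K K' -> qweight s K y -> qweight s K' x ->
  GRing.comm (x * K) (y * K').
Proof.
rewrite /qweight /GRing.comm => xy KK' hy hx.
rewrite mulrA -(mulrA x K) hy mulrA -(mulrA y K') hx -!scalerAr -!scalerAl !mulrA xy.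
by rewrite -!mulrA KK'.
Qed.

Local Ltac clear_zeros :=
  rewrite ?(mulr0, mul0r, scaler0, addr0, add0r, subr0, sub0r, oppr0).

Lemma serre_qcomml (d : L) (e x y : A) :
  GRing.comm e y -> serre e x = 0 -> serre e (qcomm d x y) = 0.
Proof.
move=> ey sx; set c := commutator e y.
have -> : serre e (qcomm d x y) = serre e x * y - d *: (y * serre e x)
    - (x * c * e + x * e * c - (q + q^-1) *: (e * x * c))
    - d *: ((e * c + c * e) * x - (q + q^-1) *: (c * x * e)).
  rewrite /c /serre /qcomm /commutator; qfield.
by rewrite /c (commutator0 ey) sx; clear_zeros.
Qed.

(* The two commutation rules below are consequences of the quantum Serre
   relations: in each case the difference of the two sides is an explicit
   two-sided combination of the hypotheses. *)
Lemma comm_qcomm_serre (e a R : A) :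
  GRing.comm a R -> serre e R = 0 -> serre e a = 0 ->
  GRing.comm (qcomm q^-1 e R) (qcomm q^-1 e a).
Proof.
move=> aR sR sa; apply: subr0_eq; set c := commutator a R.
transitivity (- (q * (q ^+ 2 + 1))^-1 *: (c * e * e) + q^-1 *: (e * c * e)
    - q / (q ^+ 2 + 1) *: (e * e * c)
    - q / (q ^+ 2 + 1) *: (serre e R * a) + (q * (q ^+ 2 + 1))^-1 *: (a * serre e R)
    + q / (q ^+ 2 + 1) *: (serre e a * R) - (q * (q ^+ 2 + 1))^-1 *: (R * serre e a)).
  rewrite /c /serre /qcomm /commutator; qfield.
by rewrite /c (commutator0 aR) sR sa; clear_zeros.
Qed.

Lemma comm_serre_qcomm (e U V : A) :
  GRing.comm U V -> serre e U = 0 -> serre e V = 0 ->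
  GRing.comm e (qcomm q^-1 U (qcomm q^-1 e V)).
Proof.
move=> UV sU sV; apply: subr0_eq; set c := commutator U V.
transitivity ((q * (q ^+ 2 + 1))^-1 *: (c * e * e) - q^-1 *: (e * c * e)
    + q / (q ^+ 2 + 1) *: (e * e * c)
    - q / (q ^+ 2 + 1) *: (serre e U * V) + (q * (q ^+ 2 + 1))^-1 *: (V * serre e U)
    - (q * (q ^+ 2 + 1))^-1 *: (serre e V * U) + q / (q ^+ 2 + 1) *: (U * serre e V)).
  rewrite /c /serre /qcomm /commutator; qfield.
by rewrite /c (commutator0 UV) sU sV; clear_zeros.
Qed.

Lemma qcommBr (d : L) (a x y : A) : qcomm d a (x - y) = qcomm d a x - qcomm d a y.
Proof. rewrite /qcomm; qfield. Qed.

Lemma qcommBl (d : L) (a x y : A) : qcomm d (x - y) a = qcomm d x a - qcomm d y a.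
Proof. rewrite /qcomm; qfield. Qed.

Lemma qcommZl (d k : L) (a x : A) : qcomm d (k *: x) a = k *: qcomm d x a.
Proof. rewrite /qcomm; qfield. Qed.

Lemma qcomm0l (d : L) (x : A) : qcomm d 0 x = 0.
Proof. by rewrite /qcomm mul0r mulr0 scaler0 subr0. Qed.

Lemma qcomm0r (d : L) (x : A) : qcomm d x 0 = 0.
Proof. by rewrite /qcomm mul0r mulr0 scaler0 subr0. Qed.

Lemma qcomm_weightl (d s : L) (K x : A) :
  qweight s K x -> qcomm d K x = (s - d) *: (x * K).
Proof. by rewrite /qcomm => ->; rewrite scalerBl. Qed.

Lemma commutator_Fqcomm (E F X K K' : A) :
  GRing.comm F X -> commutator E F = (q - q^-1)^-1 *: (K - K') ->
  qweight q^-1 K X -> qweight q K' X ->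
  commutator F (qcomm q^-1 X E) = - q^-1 *: (X * K).
Proof.
move=> FX EF hK hK'.
rewrite commutator_qcomm (commutator0 FX) qcomm0l commutator_sym EF add0r.
rewrite -scaleNr qcommZr qcommBr (qcomm_weightr _ hK) (qcomm_weightr _ hK'); qfield.
Qed.

Lemma commutator_qcomm_step (u v E F K K' M M' : A) :
  GRing.comm u E -> GRing.comm F v ->
  commutator u v = - (q - q^-1)^-1 *: (K - K') ->
  commutator E F = (q - q^-1)^-1 *: (M - M') ->
  qweight q M u -> qweight q^-1 M' u -> qweight q^-1 M v ->
  qweight q K F -> qweight q^-1 K' F -> qweight q K' E ->
  GRing.comm K' M -> GRing.comm K' M' ->
  commutator (qcomm q u F) (qcomm q^-1 E v) = - (q - q^-1)^-1 *: (K * M - K' * M').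
Proof.
move=> uE Fv uv EF hMu hM'u hMv hKF hK'F hK'E K'M K'M'.
have hE : commutator (qcomm q u F) E = q *: (u * M).
  rewrite commutator_sym commutator_qcomm (commutator0 (commr_sym uE)) qcomm0l.
  rewrite EF qcommZr qcommBr (qcomm_weightr _ hMu) (qcomm_weightr _ hM'u); qfield.
have hv : commutator (qcomm q u F) v = - (F * K').
  have vu : commutator v u = (q - q^-1)^-1 *: (K - K').
    by rewrite commutator_sym uv scaleNr opprK.
  rewrite commutator_sym commutator_qcomm (commutator0 (commr_sym Fv)) vu qcomm0r.
  rewrite qcommZl qcommBl (qcomm_weightl _ hKF) (qcomm_weightl _ hK'F); qfield.
rewrite commutator_qcomm hE hv qcommZl /qcomm -mulrA hMv mulNr -(mulrA F) hK'E.
have -> : q *: (u * (q^-1 *: (v * M)) - q^-1 *: (v * (u * M)))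
    + (E * - (F * K') - q^-1 *: - (F * (q *: (E * K'))))
    = commutator u v * M - commutator E F * K'.
  rewrite /commutator; qfield.
rewrite uv EF -!scalerAl !mulrBl -K'M -K'M'; qfield.
Qed.

Lemma qcomm_nested (a b x y w : A) : GRing.comm a y -> commutator b y = w ->
  qcomm q a (qcomm q b (qcomm q x y)) =
  qcomm q (qcomm q a (qcomm q b x)) y + q *: qcomm q a (commutator x w).
Proof.
move=> ay <-; rewrite (qcomm_jacobi q b) qcommDr qcommZr qcomm_jacobi (commutator0 ay).
by rewrite (commutator0 (commr0 _)) scaler0 addr0.
Qed.

Lemma qcomm_commutator_weight (s t : L) (a x X X' K K' Lr Lt : A) :
  GRing.comm a x -> GRing.comm a X -> GRing.comm a X' ->
  GRing.comm a K -> GRing.comm a K' ->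
  GRing.comm x Lr -> GRing.comm x Lt -> GRing.comm Lr K -> GRing.comm Lr K' ->
  commutator x X = - (q - q^-1)^-1 *: (K - K') ->
  qweight q Lr a -> qweight q^-1 Lt a ->
  qcomm q a (commutator x (s *: (X * Lr) - t *: (X' * Lt))) =
  (q * s) *: (a * Lr * (K - K')).
Proof.
move=> ax aX aX' aK aK' xLr xLt LrK LrK' xX hLr hLt.
have -> : commutator x (s *: (X * Lr) - t *: (X' * Lt)) =
    s *: commutator x (X * Lr) - t *: commutator x (X' * Lt).
  rewrite /commutator; qfield.
have aKK' := commrB aK aK'.
rewrite !commutatorMr // qcommBr !qcommZr (qcomm_mul_weight _ hLt); last first.
  by apply: commrB; apply: commrM.
rewrite (qcomm_mul_weight _ hLr); last by rewrite xX; apply/commrZ.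
rewrite mulfV // subrr scale0r scaler0 subr0 xX -!scalerAl -aKK' -mulrA (commrB LrK LrK').
rewrite mulrA !scalerA; congr (_ *: _); field.
by rewrite q_neq0 -expr2 qsqB1_neq0.
Qed.

Lemma commutator_sub_scale (s t : L) (x y x' y' : A) :
  commutator (x - s *: x') (y - t *: y') =
  commutator x y - t *: commutator x y' - s *: commutator x' y
  + (s * t) *: commutator x' y'.
Proof. rewrite /commutator; qfield. Qed.

Lemma qweight_sub_scale (s k : L) (K x y z : A) :
  qweight s K x -> qweight s K y -> GRing.comm K z -> qweight s K (x - k *: (y * z)).
Proof.
move=> hx hy Kz; apply/qweightB/qweightZ => //.
by rewrite -[s]mulr1; apply/qweightM/qweight1P.
Qed.

Lemma comm_sub_scale (k : L) (w x y z : A) :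
  GRing.comm w x -> GRing.comm w y -> GRing.comm w z -> GRing.comm w (x - k *: (y * z)).
Proof. by move=> wx wy wz; apply/commrB/commrZ/commrM. Qed.

End QAlgebra.

(** * Consequences of the relations of U_q(sl_{n+1}) *)

Ltac case_eqn :=
  repeat match goal with |- context [(?x == ?y)%N] => case: (x =P y) => ? end.

Lemma cartanC i j : cartan i j = cartan j i.
Proof. by rewrite /cartan eq_sym orbC. Qed.

Lemma sum_cartan j a l : \sum_(a <= i < (a + l).+1) cartan j i =
  (j == a)%:Z + (j == a + l)%:Z - (j.+1 == a)%:Z - (j == (a + l).+1)%:Z.
Proof.
elim: l => [|l IH]; first by rewrite addn0 big_nat1 /cartan; case_eqn => /=; lia.
by rewrite addnS big_nat_recr /= ?IH /cartan; [case_eqn => /=|]; lia.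
Qed.

Section Uq.
Variables (n : nat) (L : fieldType) (q : L) (A : algType L).
Variables (E F : nat -> A) (Kw : 'rV[int]_n -> A).
Hypothesis hrel : Uq_rels q E F Kw.
Hypothesis hq : qregular q.

Lemma Kw0 : Kw 0 = 1. Proof. by case: hrel. Qed.

Lemma KwD mu la : Kw mu * Kw la = Kw (mu + la). Proof. by case: hrel. Qed.

Lemma Kw_comm mu la : GRing.comm (Kw mu) (Kw la).
Proof. by rewrite /GRing.comm !KwD addrC. Qed.

Lemma Kw_prod (a b : nat) (f : nat -> 'rV[int]_n) :
  \prod_(a <= j < b) Kw (f j) = Kw (\sum_(a <= j < b) f j).
Proof. by rewrite (big_morph Kw (fun x y => esym (KwD x y)) Kw0). Qed.

Lemma KwE mu i s : (1 <= i <= n)%N -> q ^ pairA i mu = s -> qweight s (Kw mu) (E i).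
Proof. by case: hrel => _ _ [h _] _ _ hi <-; apply: h. Qed.

Lemma KwF mu i s : (1 <= i <= n)%N -> q ^ (- pairA i mu) = s -> qweight s (Kw mu) (F i).
Proof. by case: hrel => _ _ [_ h] _ _ hi <-; apply: h. Qed.

Lemma commutator_EF i : (1 <= i <= n)%N ->
  commutator (E i) (F i) = (q - q^-1)^-1 *: (Kw (alpha n i) - Kw (- alpha n i)).
Proof. by case: hrel => _ _ _ h _ hi; rewrite /commutator h // eqxx. Qed.

Lemma comm_EF i j : (1 <= i <= n)%N -> (1 <= j <= n)%N -> i != j ->
  GRing.comm (E i) (F j).
Proof.
case: hrel => _ _ _ h _ hi hj hij; apply/eqP; rewrite -subr_eq0 h //.
by rewrite (negbTE hij).
Qed.

Lemma serreE i j : (1 <= i <= n)%N -> (1 <= j <= n)%N -> (i == j.+1) || (j == i.+1) ->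
  serre q (E i) (E j) = 0.
Proof.
case: hrel => _ _ _ _ [h _] hi hj hij; have [+ _] := h i j hi hj hij.
by rewrite /serre !expr2 !mulrA.
Qed.

Lemma comm_EE i j : (1 <= i <= n)%N -> (1 <= j <= n)%N -> (i.+1 < j)%N || (j.+1 < i)%N ->
  GRing.comm (E i) (E j).
Proof.
case: hrel => _ _ _ _ [_ h] hi hj /orP [] hij; first by have [] := h i j hi hj hij.
by have [] := h j i hj hi hij.
Qed.

Lemma comm_FF i j : (1 <= i <= n)%N -> (1 <= j <= n)%N -> (i.+1 < j)%N || (j.+1 < i)%N ->
  GRing.comm (F i) (F j).
Proof.
case: hrel => _ _ _ _ [_ h] hi hj /orP [] hij; first by have [] := h i j hi hj hij.
by have [] := h j i hj hi hij.
Qed.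

Lemma pairAD i (mu la : 'rV[int]_n) : pairA i (mu + la) = pairA i mu + pairA i la.
Proof. by rewrite /pairA -big_split; apply: eq_bigr => j _; rewrite mxE. Qed.

Lemma pairAN i (mu : 'rV[int]_n) : pairA i (- mu) = - pairA i mu.
Proof. by rewrite /pairA -sumrN; apply: eq_bigr => j _; rewrite mxE. Qed.

Lemma pairA_alpha i j : (1 <= i <= n)%N -> pairA i (alpha n j) = cartan j i.
Proof.
move=> /andP [i_ge1 i_le]; have lt_in : (i.-1 < n)%N by lia.
rewrite /pairA (big_pred1 (Ordinal lt_in)) ?mxE /= ?prednK //.
by move=> k /=; rewrite -val_eqE /=; apply/eqP/eqP; lia.
Qed.

Definition root_sum a l : 'rV[int]_n := \sum_(a <= i < (a + l).+1) alpha n i.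

Definition pairA_sum (mu : 'rV[int]_n) a l := \sum_(a <= i < (a + l).+1) pairA i mu.

Lemma pairA_root_sum j a l : (1 <= j <= n)%N -> pairA j (root_sum a l) =
  (j == a)%:Z + (j == a + l)%:Z - (j.+1 == a)%:Z - (j == (a + l).+1)%:Z.
Proof.
move=> hj; rewrite /root_sum -sum_cartan.
rewrite (big_morph (pairA j) (pairAD j) (_ : pairA j 0 = 0)); last first.
  by rewrite /pairA big1 // => k _; rewrite mxE.
by apply: eq_bigr => i _; rewrite pairA_alpha // cartanC.
Qed.

Lemma pairA_sum_alpha j a l : (1 <= a)%N -> (a + l <= n)%N -> pairA_sum (alpha n j) a l =
  (j == a)%:Z + (j == a + l)%:Z - (j.+1 == a)%:Z - (j == (a + l).+1)%:Z.
Proof.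
move=> a_ge1 al_le; rewrite /pairA_sum -sum_cartan; apply: eq_big_nat => i hi.
by rewrite pairA_alpha //; lia.
Qed.

Lemma pairA_sumN (mu : 'rV[int]_n) a l : pairA_sum (- mu) a l = - pairA_sum mu a l.
Proof. by rewrite /pairA_sum -sumrN; apply: eq_bigr => i _; rewrite pairAN. Qed.

Lemma pairA_sumD (mu la : 'rV[int]_n) a l :
  pairA_sum (mu + la) a l = pairA_sum mu a l + pairA_sum la a l.
Proof. by rewrite /pairA_sum -big_split; apply: eq_bigr => i _; rewrite pairAD. Qed.

Lemma pairA_sumSl (mu : 'rV[int]_n) a l :
  pairA_sum mu a l.+1 = pairA a mu + pairA_sum mu a.+1 l.
Proof. by rewrite /pairA_sum big_ltn ?addSnnS //; lia. Qed.

Lemma pairA_sumSr (mu : 'rV[int]_n) a l :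
  pairA_sum mu a l.+1 = pairA_sum mu a l + pairA (a + l.+1) mu.
Proof. by rewrite /pairA_sum addnS big_nat_recr //=; lia. Qed.

Lemma root_sumSr a l : root_sum a l.+1 = root_sum a l + alpha n (a + l.+1).
Proof. by rewrite /root_sum addnS big_nat_recr //=; lia. Qed.

(* Decides goals [q ^ e = s], for [s] among [q^-1], [q], [1] and [e] a pairing
   of simple roots and partial sums of them. *)
Ltac qpow_value :=
  let ev := rewrite ?pairAD ?pairA_sumD ?pairAN ?pairA_sumN ?pairA_alpha
      ?pairA_root_sum ?pairA_sum_alpha /cartan; try lia; case_eqn => /=; lia in
  lazymatch goal with
  | |- ?x ^ ?e = ?x^-1 => have -> : e = -1 by ev
  | |- ?x ^ ?e = ?x => have -> : e = 1 by ev
  | |- ?x ^ ?e = 1 => have -> : e = 0 by ev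
  end; by rewrite ?exprN1 ?expr1z ?expr0z.

Fixpoint Eup (a l : nat) {struct l} : A :=
  if l is l'.+1 then qcomm q^-1 (E a) (Eup a.+1 l') else E a.
Fixpoint Edown (a l : nat) {struct l} : A :=
  if l is l'.+1 then qcomm q^-1 (E (a + l)) (Edown a l') else E a.
Fixpoint Fup (a l : nat) {struct l} : A :=
  if l is l'.+1 then qcomm q (F a) (Fup a.+1 l') else F a.

Lemma Eup_comm (z : A) a l : (forall i, (a <= i <= a + l)%N -> GRing.comm z (E i)) ->
  GRing.comm z (Eup a l).
Proof.
elim: l a => [|l IH] a h /=; first by apply: h; lia.
by apply: comm_qcomm; [apply: h | apply: IH => i hi; apply: h]; lia.
Qed.

Lemma Edown_comm (z : A) a l : (forall i, (a <= i <= a + l)%N -> GRing.comm z (E i)) ->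
  GRing.comm z (Edown a l).
Proof.
elim: l => [|l IH] h /=; first by apply: h; lia.
by apply: comm_qcomm; [apply: h | apply: IH => i hi; apply: h]; lia.
Qed.

Lemma Fup_comm (z : A) a l : (forall i, (a <= i <= a + l)%N -> GRing.comm z (F i)) ->
  GRing.comm z (Fup a l).
Proof.
elim: l a => [|l IH] a h /=; first by apply: h; lia.
by apply: comm_qcomm; [apply: h | apply: IH => i hi; apply: h]; lia.
Qed.

Lemma Eup_weight mu a l s : (1 <= a)%N -> (a + l <= n)%N ->
  q ^ pairA_sum mu a l = s -> qweight s (Kw mu) (Eup a l).
Proof.
move=> + + <-; elim: l a => [|l IH] a a_ge1 al_le /=.
  by apply: KwE; rewrite /pairA_sum ?addn0 ?big_nat1 //; lia.
rewrite pairA_sumSl expfzDr ?qregular_neq0 //; apply: qweight_qcomm.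
  by apply: KwE => //; lia.
by apply: IH; lia.
Qed.

Lemma Edown_weight mu a l s : (1 <= a)%N -> (a + l <= n)%N ->
  q ^ pairA_sum mu a l = s -> qweight s (Kw mu) (Edown a l).
Proof.
move=> + + <-; elim: l => [|l IH] a_ge1 al_le /=.
  by apply: KwE; rewrite /pairA_sum ?addn0 ?big_nat1 //; lia.
rewrite pairA_sumSr expfzDr ?qregular_neq0 // mulrC; apply: qweight_qcomm.
  by apply: KwE => //; lia.
by apply: IH; lia.
Qed.

Lemma Fup_weight mu a l s : (1 <= a)%N -> (a + l <= n)%N ->
  q ^ (- pairA_sum mu a l) = s -> qweight s (Kw mu) (Fup a l).
Proof.
move=> + + <-; elim: l a => [|l IH] a a_ge1 al_le /=.
  by apply: KwF; rewrite /pairA_sum ?addn0 ?big_nat1 //; lia.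
rewrite pairA_sumSl opprD expfzDr ?qregular_neq0 //; apply: qweight_qcomm.
  by apply: KwF => //; lia.
by apply: IH; lia.
Qed.

Lemma Eup_qcomm a l : (1 <= a)%N -> (a + l.+1 <= n)%N ->
  qcomm q^-1 (Eup a l) (E (a + l.+1)) = Eup a l.+1.
Proof.
elim: l a => [|l IH] a a_ge1 al_le; first by rewrite /= addn1.
rewrite -[Eup a l.+2]/(qcomm q^-1 (E a) (Eup a.+1 l.+1)) -(IH a.+1) ?addSnnS; try lia.
by rewrite qcomm_assoc //; apply: comm_EE; lia.
Qed.

Lemma Edown_qcomm a l : (1 <= a)%N -> (a + l.+1 <= n)%N ->
  qcomm q^-1 (Edown a.+1 l) (E a) = Edown a l.+1.
Proof.
elim: l => [|l IH] a_ge1 al_le; first by rewrite /= addn1.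
rewrite -[Edown a l.+2]/(qcomm q^-1 (E (a + l.+2)) (Edown a l.+1)) -IH ?addSnnS; try lia.
rewrite qcomm_assoc; last by apply: comm_EE; lia.
by rewrite /= addSnnS.
Qed.

Lemma Fup_qcomm a l : (1 <= a)%N -> (a + l.+1 <= n)%N ->
  qcomm q (Fup a l) (F (a + l.+1)) = Fup a l.+1.
Proof.
elim: l a => [|l IH] a a_ge1 al_le; first by rewrite /= addn1.
rewrite -[Fup a l.+2]/(qcomm q (F a) (Fup a.+1 l.+1)) -(IH a.+1) ?addSnnS; try lia.
by rewrite qcomm_assoc //; apply: comm_FF; lia.
Qed.

Lemma serre_Eup j m : (1 <= j)%N -> (j + m.+1 <= n)%N -> serre q (E j) (Eup j.+1 m) = 0.
Proof.
case: m => [|m] j_ge1 jm_le /=; first by apply: serreE; rewrite ?eqxx ?orbT //; lia.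
apply: serre_qcomml; last by apply: serreE; rewrite ?eqxx ?orbT //; lia.
by apply: Eup_comm => i hi; apply: comm_EE; lia.
Qed.

Lemma comm_E_Eup a l j : (1 <= a)%N -> (a + l <= n)%N -> (a < j < a + l)%N ->
  GRing.comm (E j) (Eup a l).
Proof.
elim: l a => [|l IH] a a_ge1 al_le /= hj; first lia.
have [lt_a1j|] := ltnP a.+1 j.
  by apply: comm_qcomm; [apply: comm_EE | apply: IH]; lia.
case: l IH al_le hj => [|l] IH al_le hj j_le; first lia.
have -> : j = a.+1 by lia.
apply: comm_serre_qcomm => //.
- by apply: Eup_comm => i hi; apply: comm_EE; lia.
- by apply: serreE; rewrite ?eqxx //; lia.
- by apply: serre_Eup; lia.
Qed.

Lemma comm_Eup_Edown s l : (2 <= s)%N -> (s + l.+1 <= n)%N ->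
  GRing.comm (Eup s l.+1) (Edown s.-1 l.+1).
Proof.
move=> s_ge2 sl_le; suff : forall j, (j <= l)%N -> GRing.comm (Eup s l.+1) (Edown s.-1 j.+1).
  by apply.
elim=> [|j IH] jl.
  rewrite /= addn1 prednK; last by lia.
  apply: comm_qcomm_serre => //.
  - by apply: Eup_comm => i hi; apply: comm_EE; lia.
  - by apply: serre_Eup; lia.
  - by apply: serreE; rewrite ?prednK ?eqxx //; lia.
by apply: comm_qcomm; [apply/commr_sym/comm_E_Eup | apply: IH]; lia.
Qed.

Lemma commutator_Fup_Edown s l : (1 <= s)%N -> (s + l <= n)%N ->
  commutator (Fup s l) (Edown s l) =
  - (q - q^-1)^-1 *: (Kw (root_sum s l) - Kw (- root_sum s l)).
Proof.
elim: l => [|l IH] s_ge1 sl_le.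
  by rewrite /= commutator_sym commutator_EF ?scaleNr /root_sum ?addn0 ?big_nat1 //; lia.
set m := (s + l.+1)%N; have hm : (1 <= m <= n)%N by lia.
rewrite -Fup_qcomm // -/m [Edown s l.+1]/= -/m root_sumSr -/m opprD -!KwD.
apply: commutator_qcomm_step => //; try apply: Kw_comm.
- by apply/commr_sym/Fup_comm => i hi; apply: comm_EF; lia.
- by apply: Edown_comm => i hi; apply/commr_sym/comm_EF; lia.
- by apply: IH; lia.
- exact: commutator_EF.
- by apply: Fup_weight; [| | qpow_value]; lia.
- by apply: Fup_weight; [| | qpow_value]; lia.
- by apply: Edown_weight; [| | qpow_value]; lia.
- by apply: KwF; [| qpow_value].
- by apply: KwF; [| qpow_value].
- by apply: KwE; [| qpow_value].
Qed.

Section BgenRelation.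
Variables (r l : nat) (c1 cr cT : L).
Hypotheses (r_ge2 : (2 <= r)%N) (n_eq : (r.+1 + l.+1 + r = n.+1)%N).

Local Notation T := (r.+1 + l.+1)%N.
Local Notation Xp := (Eup r.+1 l).
Local Notation Xm := (Edown r.+1 l).
Local Notation Lr := (Kw (alpha n r) * Kw (- alpha n T)).
Local Notation LT := (Kw (alpha n T) * Kw (- alpha n r)).
Local Notation B1 := (F r.-1 - c1 *: (E T.+1 * Kw (- alpha n r.-1))).
Local Notation Br := (F r - cr *: (Eup r.+1 l.+1 * Kw (- alpha n r))).
Local Notation BT := (F T - cT *: (Edown r l.+1 * Kw (- alpha n T))).

Lemma comm_B1_BT : GRing.comm B1 BT.
Proof.
apply: commrB; last apply: commrZ; apply: commr_sym.
  apply: comm_sub_scale.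
  - by apply: comm_FF; lia.
  - by apply/commr_sym/comm_EF; lia.
  - by apply/commr_sym/qweight1P/KwF; [|qpow_value]; lia.
apply: commrB; last apply: commrZ.
  apply/commr_sym/commrM.
  - by apply: Edown_comm => i hi; apply/commr_sym/comm_EF; lia.
  - by apply/commr_sym/qweight1P/KwF; [|qpow_value]; lia.
apply/commr_sym/(comm_mul_weight (s := q)).
- by apply: Edown_comm => i hi; apply: comm_EE; lia.
- exact: Kw_comm.
- by apply: Edown_weight; [| |qpow_value]; lia.
- by apply: KwE; [|qpow_value]; lia.
Qed.

Lemma commutator_Br_BT :
  commutator Br BT = (q^-1 * cT) *: (Xm * Lr) - (q^-1 * cr) *: (Xp * LT).
Proof.
have FrT : commutator (F r) (Edown r l.+1 * Kw (- alpha n T)) = - q^-1 *: (Xm * Lr).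
  rewrite commutatorMr; last by apply/commr_sym/qweight1P/KwF; [|qpow_value]; lia.
  rewrite -Edown_qcomm; try lia.
  rewrite (commutator_Fqcomm hq (K := Kw (alpha n r)) (K' := Kw (- alpha n r))) //.
  - by rewrite -scalerAl mulrA.
  - by apply: Edown_comm => i hi; apply/commr_sym/comm_EF; lia.
  - by apply: commutator_EF; lia.
  - by apply: Edown_weight; [| |qpow_value]; lia.
  - by apply: Edown_weight; [| |qpow_value]; lia.
have rFT : commutator (Eup r.+1 l.+1 * Kw (- alpha n r)) (F T) = q^-1 *: (Xp * LT).
  rewrite commutator_sym commutatorMr; last first.
    by apply/commr_sym/qweight1P/KwF; [|qpow_value]; lia.
  rewrite -Eup_qcomm; try lia.
  rewrite (commutator_Fqcomm hq (K := Kw (alpha n T)) (K' := Kw (- alpha n T))) //.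
  - by rewrite -scalerAl mulrA scaleNr opprK.
  - by apply: Eup_comm => i hi; apply/commr_sym/comm_EF; lia.
  - by apply: commutator_EF; lia.
  - by apply: Eup_weight; [| |qpow_value]; lia.
  - by apply: Eup_weight; [| |qpow_value]; lia.
have rT : commutator (Eup r.+1 l.+1 * Kw (- alpha n r)) (Edown r l.+1 * Kw (- alpha n T)) = 0.
  apply/commutator0/(comm_mul_weight (s := q^-1)).
  - by have := comm_Eup_Edown (s := r.+1) (l := l); apply; lia.
  - exact: Kw_comm.
  - by apply: Edown_weight; [| |qpow_value]; lia.
  - by apply: Eup_weight; [| |qpow_value]; lia.
rewrite commutator_sub_scale FrT rFT rT (commutator0 (comm_FF _ _ _)); try lia.
nc_field L A.
Qed.

Lemma qcomm_B1_Br_BT :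
  qcomm q B1 (qcomm q Br (qcomm q (Fup r.+1 l) BT)) =
  qcomm q (qcomm q B1 (qcomm q Br (Fup r.+1 l))) BT
  + (q * cT) *: (B1 * Lr * (Kw (root_sum r.+1 l) - Kw (- root_sum r.+1 l))).
Proof.
have B1_weight mu s : q ^ (- pairA r.-1 mu) = s -> q ^ pairA T.+1 mu = s ->
    qweight s (Kw mu) B1.
  move=> hF hE; apply: qweight_sub_scale; last exact: Kw_comm.
    by apply: KwF; first lia.
  by apply: KwE; first lia.
have B1_comm z : GRing.comm z (F r.-1) -> GRing.comm z (E T.+1) ->
    GRing.comm z (Kw (- alpha n r.-1)) -> GRing.comm B1 z.
  by move=> zF zE zK; apply/commr_sym/comm_sub_scale.
have B1_Kw mu : q ^ (- pairA r.-1 mu) = 1 -> q ^ pairA T.+1 mu = 1 ->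
    GRing.comm B1 (Kw mu).
  by move=> hF hE; apply/commr_sym/qweight1P/B1_weight.
rewrite (qcomm_nested q (Fup r.+1 l) comm_B1_BT commutator_Br_BT).
rewrite (qcomm_commutator_weight hq _ _ (X' := Xp)
    (K := Kw (root_sum r.+1 l)) (K' := Kw (- root_sum r.+1 l))); first last.
- by rewrite KwD; apply: B1_weight; qpow_value.
- by rewrite KwD; apply: B1_weight; qpow_value.
- by apply: commutator_Fup_Edown; lia.
- by apply/commr_sym/commrM; apply: Kw_comm.
- by apply/commr_sym/commrM; apply: Kw_comm.
- by rewrite KwD; apply/commr_sym/qweight1P/Fup_weight; [| |qpow_value]; lia.
- by rewrite KwD; apply/commr_sym/qweight1P/Fup_weight; [| |qpow_value]; lia.
- by apply: B1_Kw; qpow_value.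
- by apply: B1_Kw; qpow_value.
- apply: B1_comm.
  + by apply/commr_sym/Eup_comm => i hi; apply/commr_sym/comm_EF; lia.
  + by apply/commr_sym/Eup_comm => i hi; apply: comm_EE; lia.
  + by apply/commr_sym/qweight1P/Eup_weight; [| |qpow_value]; lia.
- apply: B1_comm.
  + by apply/commr_sym/Edown_comm => i hi; apply/commr_sym/comm_EF; lia.
  + by apply/commr_sym/Edown_comm => i hi; apply: comm_EE; lia.
  + by apply/commr_sym/qweight1P/Edown_weight; [| |qpow_value]; lia.
- apply: B1_comm.
  + by apply/commr_sym/Fup_comm => i hi; apply: comm_FF; lia.
  + by apply/commr_sym/Fup_comm => i hi; apply: comm_EF; lia.
  + by apply/commr_sym/qweight1P/Fup_weight; [| |qpow_value]; lia.
by rewrite scalerA (mulrA q q^-1) mulfV ?qregular_neq0 // mul1r.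
Qed.

End BgenRelation.

Lemma foldr_Eup a l :
  foldr (fun j acc => qcomm q^-1 (E j) acc) (E (a + l)) (iota a l) = Eup a l.
Proof. by elim: l a => [|l IH] a /=; rewrite ?addn0 // -addSnnS IH. Qed.

Lemma foldr_Fup a l :
  foldr (fun j acc => qcomm q (F j) acc) (F (a + l)) (iota a l) = Fup a l.
Proof. by elim: l a => [|l IH] a /=; rewrite ?addn0 // -addSnnS IH. Qed.

Lemma foldr_Edown a l :
  foldr (fun j acc => qcomm q^-1 (E j) acc) (E a) (rev (iota a.+1 l)) = Edown a l.
Proof.
elim: l => [|l IH] //.
by rewrite -[l.+1]addn1 iotaD rev_cat addn1 /= IH addSnnS.
Qed.

Lemma Bgen_relation (r : nat) (c : nat -> L) : (2 <= r)%N -> (r.+1 <= n.+1 %/ 2)%N ->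
  let B := Bgen r q E F Kw c in
  qcomm q (B r.-1) (qcomm q (B r) (qcomm q (FXp n r q F) (B (tau n r)))) =
    qcomm q (qcomm q (B r.-1) (qcomm q (B r) (FXp n r q F))) (B (tau n r))
    + (q * c (tau n r)) *: (B r.-1 * Lw Kw r * (KX r Kw - KXinv r Kw)).
Proof.
move=> r_ge2 hr B.
have {hr} hn2 : (r.+1 + r <= n)%N by move: hr; rewrite leq_divRL // => h; lia.
set l := (n - r - r.+1)%N.
have n_eq : (r.+1 + l.+1 + r = n.+1)%N by rewrite /l; lia.
have htau : tau n r = (r.+1 + l.+1)%N by rewrite /tau; lia.
have hB1 : B r.-1 = F r.-1 - c r.-1 *: (E (r.+1 + l.+1).+1 * Kw (- alpha n r.-1)).
  rewrite /B /Bgen !ifF; first by congr (_ - _ *: (E _ * _)); rewrite /tau; lia.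
    by apply/eqP; rewrite /tau; lia.
  by apply/eqP; lia.
have hBr : B r = F r - c r *: (Eup r.+1 l.+1 * Kw (- alpha n r)).
  rewrite /B /Bgen eqxx htau /EXp -/l (_ : n - r = r.+1 + l)%N ?foldr_Eup ?Eup_qcomm //; lia.
have hBT : B (tau n r) =
    F (r.+1 + l.+1) - c (tau n r) *: (Edown r l.+1 * Kw (- alpha n (r.+1 + l.+1))).
  rewrite /B /Bgen ifF; last by apply/eqP; lia.
  by rewrite eqxx /EXm -/l foldr_Edown Edown_qcomm ?htau //; lia.
have hX : FXp n r q F = Fup r.+1 l.
  by rewrite /FXp -/l (_ : n - r = r.+1 + l)%N ?foldr_Fup //; lia.
have hK : KX r Kw = Kw (root_sum r.+1 l).
  by rewrite /KX Kw_prod /root_sum (_ : n - r = r.+1 + l)%N //; lia.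
have hKi : KXinv r Kw = Kw (- root_sum r.+1 l).
  by rewrite /KXinv Kw_prod /root_sum sumrN (_ : n - r = r.+1 + l)%N //; lia.
rewrite hB1 hBr hBT hX hK hKi /Lw htau.
exact: qcomm_B1_Br_BT.
Qed.

End Uq.

(** * The diagram automorphism *)

Section DiagramAutomorphism.
Variables (n : nat) (L : fieldType) (q : L) (A : algType L).
Variables (E F : nat -> A) (Kw : 'rV[int]_n -> A).
Hypothesis hrel : Uq_rels q E F Kw.

Definition tau_weight (mu : 'rV[int]_n) : 'rV[int]_n := \row_(j < n) mu ord0 (rev_ord j).

Lemma tau_weight0 : tau_weight 0 = 0.
Proof. by apply/rowP => j; rewrite !mxE. Qed.

Lemma tau_weightD mu la : tau_weight (mu + la) = tau_weight mu + tau_weight la.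
Proof. by apply/rowP => j; rewrite !mxE. Qed.

Lemma tau_weightN mu : tau_weight (- mu) = - tau_weight mu.
Proof. by apply/rowP => j; rewrite !mxE. Qed.

Lemma pairA_coord i (mu : 'rV[int]_n) (lt_in : (i.-1 < n)%N) : (1 <= i)%N ->
  pairA i mu = mu ord0 (Ordinal lt_in).
Proof.
move=> i_ge1; rewrite /pairA (big_pred1 (Ordinal lt_in)) // => k /=.
by rewrite -val_eqE /=; apply/eqP/eqP; lia.
Qed.

Lemma pairA_tau_weight i mu : (1 <= i <= n)%N -> pairA (tau n i) (tau_weight mu) = pairA i mu.
Proof.
move=> hi; have lt_tau : ((tau n i).-1 < n)%N by rewrite /tau; lia.
have lt_i : (i.-1 < n)%N by lia.
rewrite (pairA_coord _ lt_tau) ?(pairA_coord _ lt_i) /tau ?mxE; try lia.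
by congr (mu ord0 _); apply: val_inj => /=; rewrite /tau; lia.
Qed.

Lemma tau_weight_alpha i : (1 <= i <= n)%N -> tau_weight (alpha n i) = alpha n (tau n i).
Proof.
move=> hi; apply/rowP => j; rewrite !mxE /= /cartan /tau.
by have := ltn_ord j; case_eqn => /=; lia.
Qed.

Lemma Uq_rels_tau : Uq_rels q (E \o tau n) (F \o tau n) (Kw \o tau_weight).
Proof.
case: hrel => h0 h1 [hE hF] hEF [hS hC].
have tau_in i : (1 <= i <= n)%N -> (1 <= tau n i <= n)%N by rewrite /tau; lia.
split=> /=.
- by rewrite tau_weight0.
- by move=> mu la; rewrite h1 tau_weightD.
- by split=> mu i hi; rewrite ?hE ?hF ?tau_in // pairA_tau_weight.
- move=> i j hi hj; rewrite hEF ?tau_in //.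
  have -> : (tau n i == tau n j) = (i == j) by apply/eqP/eqP; rewrite /tau; lia.
  by case: eqP => // _; rewrite tau_weightN tau_weight_alpha.
split=> i j hi hj hij.
  apply: hS; rewrite ?tau_in //.
  by case/orP: hij => /eqP h; apply/orP; [right|left]; apply/eqP; rewrite /tau; lia.
have [] := hC (tau n j) (tau n i) (tau_in _ hj) (tau_in _ hi) ltac:(rewrite /tau; lia).
by move=> -> ->.
Qed.

Lemma map_tau_iota a l : (1 <= a)%N -> (a + l <= n.+1)%N ->
  map (tau n) (iota a l) = rev (iota (n.+2 - a - l) l).
Proof.
have iotaSr m k : iota m k.+1 = rcons (iota m k) (m + k) by rewrite -cats1 -addn1 iotaD.
elim: l a => [|l IH] a a_ge1 al_le //; rewrite [map _ _]/= IH ?iotaSr ?rev_rcons; try lia.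
by congr (_ :: rev (iota _ _)); rewrite /tau; lia.
Qed.

Variables (r : nat) (c : nat -> L).
Hypotheses (r_ge2 : (2 <= r)%N) (r_le : (r.+1 <= n.+1 %/ 2)%N).
Hypothesis hq : qregular q.

Let n_ge : (r.+1 + r <= n)%N.
Proof. by move: r_le; rewrite leq_divRL // => h; lia. Qed.

Lemma EXp_tau : EXp n r q (E \o tau n) = EXm n r q E.
Proof.
rewrite /EXp /EXm -(foldr_map (tau n) (fun j acc => qcomm q^-1 (E j) acc)).
rewrite map_tau_iota /=; try lia.
by congr (foldr _ (E _) (rev (iota _ _))); rewrite /tau; lia.
Qed.

Lemma EXm_tau : EXm n r q (E \o tau n) = EXp n r q E.
Proof.
rewrite /EXp /EXm -(foldr_map (tau n) (fun j acc => qcomm q^-1 (E j) acc)).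
rewrite map_rev map_tau_iota ?revK /=; try lia.
by congr (foldr _ (E _) (iota _ _)); rewrite /tau; lia.
Qed.

Lemma FXp_tau : FXp n r q (F \o tau n) = FXm n r q F.
Proof.
rewrite /FXp /FXm -(foldr_map (tau n) (fun j acc => qcomm q (F j) acc)).
rewrite map_tau_iota /=; try lia.
by congr (foldr _ (F _) (rev (iota _ _))); rewrite /tau; lia.
Qed.

Lemma Kw_tau_sum (f : nat -> 'rV[int]_n) :
  (forall j, (r.+1 <= j <= n - r)%N -> tau_weight (f j) = f (tau n j)) ->
  \prod_(r.+1 <= j < (n - r).+1) (Kw \o tau_weight) (f j) =
  \prod_(r.+1 <= j < (n - r).+1) Kw (f j).
Proof.
move=> hf; rewrite /= !(Kw_prod hrel) (eq_big_nat _ _ (F2 := fun j => f (tau n j))).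
  by rewrite big_nat_rev; congr Kw; apply: eq_big_nat => j hj; congr f; rewrite /tau; lia.
by move=> j hj; apply: hf; lia.
Qed.

Lemma KX_tau : KX r (Kw \o tau_weight) = KX r Kw.
Proof. by apply: Kw_tau_sum => j hj; rewrite tau_weight_alpha //; lia. Qed.

Lemma KXinv_tau : KXinv r (Kw \o tau_weight) = KXinv r Kw.
Proof. by apply: Kw_tau_sum => j hj; rewrite tau_weightN tau_weight_alpha //; lia. Qed.

Lemma Bgen_relation_tau :
  let B := Bgen r q E F Kw c in
  qcomm q (B (tau n r.-1)) (qcomm q (B (tau n r)) (qcomm q (FXm n r q F) (B r))) =
    qcomm q (qcomm q (B (tau n r.-1)) (qcomm q (B (tau n r)) (FXm n r q F))) (B r)
    + (q * c r) *: (B (tau n r.-1) * Lw Kw (tau n r) * (KX r Kw - KXinv r Kw)).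
Proof.
move=> B.
have := Bgen_relation Uq_rels_tau hq (c \o tau n) r_ge2 r_le.
have ttr : tau n (tau n r) = r by rewrite /tau; lia.
have ttr1 : tau n (tau n r.-1) = r.-1 by rewrite /tau; lia.
have Bm1 :
    Bgen r q (E \o tau n) (F \o tau n) (Kw \o tau_weight) (c \o tau n) r.-1 = B (tau n r.-1).
  rewrite /B /Bgen !ifF; try by apply/eqP; rewrite /tau; lia.
  by rewrite /= ttr1 tau_weightN tau_weight_alpha //; lia.
have Br : Bgen r q (E \o tau n) (F \o tau n) (Kw \o tau_weight) (c \o tau n) r = B (tau n r).
  rewrite /B /Bgen eqxx ifF; last by apply/eqP; rewrite /tau; lia.
  by rewrite eqxx EXp_tau /= ttr tau_weightN tau_weight_alpha //; lia.
have BT : Bgen r q (E \o tau n) (F \o tau n) (Kw \o tau_weight) (c \o tau n) (tau n r) = B r.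
  rewrite /B /Bgen ifF; last by apply/eqP; rewrite /tau; lia.
  by rewrite !eqxx EXm_tau /= ttr tau_weightN tau_weight_alpha ?ttr //; rewrite /tau; lia.
rewrite /= Bm1 Br BT FXp_tau KX_tau KXinv_tau ttr.
by rewrite /Lw /= tau_weightN !tau_weight_alpha ?ttr //; rewrite /tau; lia.
Qed.

End DiagramAutomorphism.

Section QparRegular.
Variable k : fieldType.

Lemma qparX m : qpar k ^+ m = FracField.tofrac ('X^(2 * m) : {poly k}).
Proof. by rewrite /qpar /qhalf -exprM tofracXn. Qed.

Lemma qpar_regular : qregular (qpar k).
Proof.
split.
- by rewrite -[qpar k]expr1 qparX tofrac_eq0 -size_poly_eq0 size_polyXn.
- by rewrite qparX -tofrac1 -tofracB tofrac_eq0 -size_poly_eq0 size_Xn_sub_1.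
- by rewrite qparX -tofrac1 -tofracD tofrac_eq0 -size_poly_eq0 -polyC1 size_XnaddC.
Qed.
End QparRegular.

Theorem lemmaA2 (k : fieldType) (hk : [pchar k] =i pred0) (n r : nat)
  (hn : (1 <= n)%N) (hr : (2 <= r)%N) (hr' : (r.+1 <= n.+1 %/ 2)%N)
  (A : algType (Lfield k)) (E F : nat -> A) (Kw : 'rV[int]_n -> A)
  (c : nat -> Lfield k)
  (hrel : Uq_rels (qpar k) E F Kw)
  (hc0 : forall i, (1 <= i <= n)%N -> ~~ (r.+1 <= i <= n - r)%N -> c i != 0)
  (hcs : forall i, (1 <= i <= n)%N -> ~~ (r.+1 <= i <= n - r)%N ->
           i != r -> i != tau n r -> c i = c (tau n i)) :
  let q := qpar k in
  let B := Bgen r q E F Kw c in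
  qcomm q (B r.-1) (qcomm q (B r) (qcomm q (FXp n r q F) (B (tau n r)))) =
    qcomm q (qcomm q (B r.-1) (qcomm q (B r) (FXp n r q F))) (B (tau n r))
    + (q * c (tau n r)) *: (B r.-1 * Lw Kw r * (KX r Kw - KXinv r Kw))
  /\
  qcomm q (B (tau n r.-1)) (qcomm q (B (tau n r)) (qcomm q (FXm n r q F) (B r))) =
    qcomm q (qcomm q (B (tau n r.-1)) (qcomm q (B (tau n r)) (FXm n r q F))) (B r)
    + (q * c r) *: (B (tau n r.-1) * Lw Kw (tau n r) * (KX r Kw - KXinv r Kw)).
Proof.
(* The relations hold for every choice of the parameters and in every
   characteristic. *)
move=> q B; have hq := qpar_regular k.
split; first exact: (Bgen_relation hrel hq c hr hr').
exact: (Bgen_relation_tau hrel c hr hr' hq).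
Qed.
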